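(* (Height-preserving contraction.) For all $n\geq1$, finite multisets of formulas $\Gamma,\Delta$, every formula $\nu$ and every classical formula $\alpha$: $\vdash^n\Gamma,\nu,\nu\Rightarrow\Delta$ implies $\vdash^n\Gamma,\nu\Rightarrow\Delta$ (left contraction), and $\vdash^n\Gamma\Rightarrow\alpha,\alpha,\Delta$ implies $\vdash^n\Gamma\Rightarrow\alpha,\Delta$ (right contraction for classical formulas).
   Context: Fix a countably infinite set $\mathsf{Prop}$ of propositional variables. Classical formulas are generated by $\alpha ::= p \mid \bot \mid \neg\alpha \mid \alpha\wedge\alpha \mid \alpha\vee\alpha$ with $p\in\mathsf{Prop}$. Formulas are generated by $\phi ::= \alpha \mid \phi\wedge\phi \mid \phi\vee\phi \mid \phi\mathbin{\backslash\!\!/}\phi$ where $\alpha$ is classical ($\vee$: split disjunction, $\mathbin{\backslash\!\!/}$: inquisitive disjunction). A sequent is $\Gamma\Rightarrow\Delta$ with $\Gamma,\Delta$ finite multisets of formulas; ''$\Gamma,\Delta$'' denotes multiset union. Deep-inference notation: for a formula $\chi$ with a designated occurrence of a subformula not in the scope of any negation, $\chi\{\eta\}$ denotes the result of replacing that occurrence by $\eta$. The cut-free calculus $\mathsf{GT}^-$ ($\alpha$ ranges over classical formulas, $\Lambda$ over multisets of classical formulas): axioms $\Gamma,p\Rightarrow p,\Delta$ and $\Gamma,\bot\Rightarrow\Delta$; (L$\neg$) from $\Gamma\Rightarrow\alpha,\Delta$ infer $\Gamma,\neg\alpha\Rightarrow\Delta$; (R$\neg$) from $\Gamma,\alpha\Rightarrow\Delta$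 infer $\Gamma\Rightarrow\neg\alpha,\Delta$; (L$\wedge$) from $\Gamma,\phi,\psi\Rightarrow\Delta$ infer $\Gamma,\phi\wedge\psi\Rightarrow\Delta$; (R$\wedge$) from $\Gamma\Rightarrow\phi,\Lambda$ and $\Gamma\Rightarrow\psi,\Lambda$ infer $\Gamma\Rightarrow\phi\wedge\psi,\Lambda,\Delta$; (L$\vee$) from $\Gamma,\phi\Rightarrow\Lambda$ and $\Gamma,\psi\Rightarrow\Lambda$ infer $\Gamma,\phi\vee\psi\Rightarrow\Lambda,\Delta$; (R$\vee$) from $\Gamma\Rightarrow\phi,\psi,\Delta$ infer $\Gamma\Rightarrow\phi\vee\psi,\Delta$; (L$\mathbin{\backslash\!\!/}$) from $\Gamma,\chi\{\phi_L\}\Rightarrow\Delta$ and $\Gamma,\chi\{\phi_R\}\Rightarrow\Delta$ infer $\Gamma,\chi\{\phi_L\mathbin{\backslash\!\!/}\phi_R\}\Rightarrow\Delta$; (R$\mathbin{\backslash\!\!/}$) from $\Gamma\Rightarrow\chi\{\phi_i\},\Delta$ ($i\in\{L,R\}$) infer $\Gamma\Rightarrow\chi\{\phi_L\mathbin{\backslash\!\!/}\phi_R\},\Delta$. The height of a derivation consisting of a single axiom is $1$; otherwise it is $1$ plus the maximum height of the subderivations of the premises of its last rule. $\vdash^n\Gamma\Rightarrow\Delta$ means there is a $\mathsf{GT}^-$-derivation of $\Gamma\Rightarrow\Delta$ of height at most $n$. *)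

From Stdlib Require Import List Permutation Arith.
Import ListNotations.

(* Formulas of propositional inquisitive-style logic with split disjunction
   [Or] and inquisitive disjunction [Idis]. Propositional variables: nat. *)
Inductive formula : Type :=
| Var  : nat -> formula
| Bot  : formula
| Neg  : formula -> formula
| And  : formula -> formula -> formula
| Or   : formula -> formula -> formula
| Idis : formula -> formula -> formula.

Fixpoint classical (f : formula) : bool :=
  match f with
  | Var _ | Bot => true
  | Neg a => classical a
  | And a b | Or a b => classical a && classical b
  | Idis _ _ => false
  end.

Fixpoint wf (f : formula) : bool :=
  match f with
  | Var _ | Bot => true
  | Neg a => classical a
  | And a b | Or a b | Idis a b => wf a && wf b
  end.

Inductive ctx : Type :=
| Hole  : ctx
| CAndL : ctx -> formula -> ctx
| CAndR : formula -> ctx -> ctx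
| COrL  : ctx -> formula -> ctx
| COrR  : formula -> ctx -> ctx
| CIdisL : ctx -> formula -> ctx
| CIdisR : formula -> ctx -> ctx.

Fixpoint plug (c : ctx) (e : formula) : formula :=
  match c with
  | Hole => e
  | CAndL c' f => And (plug c' e) f
  | CAndR f c' => And f (plug c' e)
  | COrL c' f => Or (plug c' e) f
  | COrR f c' => Or f (plug c' e)
  | CIdisL c' f => Idis (plug c' e) f
  | CIdisR f c' => Idis f (plug c' e)
  end.

Definition all_classical (L : list formula) : Prop :=
  Forall (fun f => classical f = true) L.

(* Sequents Gamma => Delta with Gamma, Delta finite multisets, represented by
   lists taken up to permutation.  [derivh h G D] : there is a GT^- derivation
   of G => D of height exactly h. *)
Inductive derivh : nat -> list formula -> list formula -> Prop :=
| ax_var : forall p G D G' D',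
    Permutation G (Var p :: G') -> Permutation D (Var p :: D') ->
    derivh 1 G D
| ax_bot : forall G D G',
    Permutation G (Bot :: G') -> derivh 1 G D
| r_Lneg : forall n a G D Gc Dc,
    classical a = true ->
    derivh n G (a :: D) ->
    Permutation Gc (Neg a :: G) -> Permutation Dc D ->
    derivh (S n) Gc Dc
| r_Rneg : forall n a G D Gc Dc,
    classical a = true ->
    derivh n (a :: G) D ->
    Permutation Gc G -> Permutation Dc (Neg a :: D) ->
    derivh (S n) Gc Dc
| r_Land : forall n phi psi G D Gc Dc,
    derivh n (phi :: psi :: G) D ->
    Permutation Gc (And phi psi :: G) -> Permutation Dc D ->
    derivh (S n) Gc Dc
| r_Rand : forall n1 n2 phi psi G L D Gc Dc,
    all_classical L ->
    derivh n1 G (phi :: L) -> derivh n2 G (psi :: L) ->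
    Permutation Gc G -> Permutation Dc (And phi psi :: L ++ D) ->
    derivh (S (Nat.max n1 n2)) Gc Dc
| r_Lor : forall n1 n2 phi psi G L D Gc Dc,
    all_classical L ->
    derivh n1 (phi :: G) L -> derivh n2 (psi :: G) L ->
    Permutation Gc (Or phi psi :: G) -> Permutation Dc (L ++ D) ->
    derivh (S (Nat.max n1 n2)) Gc Dc
| r_Ror : forall n phi psi G D Gc Dc,
    derivh n G (phi :: psi :: D) ->
    Permutation Gc G -> Permutation Dc (Or phi psi :: D) ->
    derivh (S n) Gc Dc
| r_Lidis : forall n1 n2 (c : ctx) phiL phiR G D Gc Dc,
    derivh n1 (plug c phiL :: G) D -> derivh n2 (plug c phiR :: G) D ->
    Permutation Gc (plug c (Idis phiL phiR) :: G) -> Permutation Dc D ->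
    derivh (S (Nat.max n1 n2)) Gc Dc
| r_Ridis : forall n (c : ctx) phiL phiR (i : bool) G D Gc Dc,
    derivh n G (plug c (if i then phiL else phiR) :: D) ->
    Permutation Gc G -> Permutation Dc (plug c (Idis phiL phiR) :: D) ->
    derivh (S n) Gc Dc.

Definition vdash (n : nat) (G D : list formula) : Prop :=
  exists m, m <= n /\ derivh m G D.

(* Both contractions are proved together by induction on the height.  If no
   copy of the contracted formula is principal in the last rule, the rule
   commutes with contraction, as it does with any replacement of formulas in
   the context.  If a copy is principal, the other copy is taken apart by a
   height-preserving inversion of the same rule, and the duplicated immediate
   subformulas are contracted at smaller height.  A principal negation on the
   left turns left contraction into right contraction of a classical formula
   and vice versa, which is why both are proved simultaneously. *)

From Stdlib Require Import List Permutation Arith Bool Lia.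
Import ListNotations.

Definition formula_eq_dec : forall x y : formula, {x = y} + {x <> y}.
Proof. decide equality; apply Nat.eq_dec. Qed.

(* Decides a [Permutation] goal from the [Permutation] hypotheses by counting
   the occurrences of an arbitrary formula. *)
Ltac perm_solve :=
  solve [
  lazymatch goal with |- ?g => tryif has_evar g then fail else idtac end;
  apply (proj2 (Permutation_count_occ formula_eq_dec _ _));
  let x := fresh "x" in intro x;
  repeat match goal with
  | H : Permutation _ _ |- _ =>
      let E := fresh "E" in
      pose proof (proj1 (Permutation_count_occ formula_eq_dec _ _) H x) as E; clear H
  end;
  repeat (progress (repeat rewrite count_occ_app in *; simpl count_occ in * ));
  repeat match goal with
  | |- context [formula_eq_dec ?a ?b] => destruct (formula_eq_dec a b)
  | H : context [formula_eq_dec ?a ?b] |- _ => destruct (formula_eq_dec a b)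
  end; (lia || congruence) ].

Lemma in_perm (x : formula) L : In x L -> exists L', Permutation L (x :: L').
Proof.
  intros [l1 [l2 ->]]%in_split. exists (l1 ++ l2).
  apply Permutation_sym, Permutation_middle.
Qed.

Lemma perm_head_in (x : formula) D D' : Permutation D (x :: D') -> In x D.
Proof. intro H. apply (Permutation_in _ (Permutation_sym H)). now left. Qed.

Lemma perm_singleton_inv (f x : formula) F : Permutation [f] (x :: F) -> x = f /\ F = [].
Proof. intros H%Permutation_length_1_inv. now injection H. Qed.

Lemma perm_double_inv (f x : formula) F : Permutation [f; f] (x :: F) -> x = f /\ F = [f].
Proof. intros [E | E]%Permutation_length_2_inv; now injection E. Qed.

Lemma perm_cons_app_inv (x : formula) Gp F G : Permutation (x :: Gp) (F ++ G) ->
  (exists F', Permutation F (x :: F') /\ Permutation Gp (F' ++ G)) \/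
  (exists K, Permutation G (x :: K) /\ Permutation Gp (F ++ K)).
Proof.
  intro H. assert (Hx : In x (F ++ G)) by (apply (Permutation_in _ H); now left).
  apply in_app_or in Hx as [[F' HF]%in_perm | [K HK]%in_perm].
  - left. exists F'. split; [exact HF | perm_solve].
  - right. exists K. split; [exact HK | perm_solve].
Qed.

Lemma perm_app_app_inv (L D F K : list formula) : Permutation (L ++ D) (F ++ K) ->
  exists F1 F2 L' D', Permutation F (F1 ++ F2) /\ Permutation L (F1 ++ L') /\
    Permutation D (F2 ++ D') /\ Permutation K (L' ++ D').
Proof.
  revert L D K; induction F as [|x F IH]; intros L D K H.
  - exists [], [], L, D. repeat split; perm_solve.
  - assert (Hx : In x (L ++ D)) by exact (perm_head_in _ _ _ H).
    apply in_app_or in Hx as [[L0 HL]%in_perm | [D0 HD]%in_perm].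
    + destruct (IH L0 D K) as (F1 & F2 & L' & D' & ? & ? & ? & ?); [perm_solve|].
      exists (x :: F1), F2, L', D'. repeat split; perm_solve.
    + destruct (IH L D0 K) as (F1 & F2 & L' & D' & ? & ? & ? & ?); [perm_solve|].
      exists F1, (x :: F2), L', D'. repeat split; perm_solve.
Qed.

(* [derivable n G D]: [G => D] has a derivation of height at most [n].  Unlike
   [derivh], all premises of a rule are bounded by the same [n]. *)
Inductive derivable : nat -> list formula -> list formula -> Prop :=
| dr_var : forall n p G D G' D',
    Permutation G (Var p :: G') -> Permutation D (Var p :: D') -> derivable (S n) G D
| dr_bot : forall n G D G', Permutation G (Bot :: G') -> derivable (S n) G D
| dr_Lneg : forall n a G D Gc Dc, classical a = true -> derivable n G (a :: D) ->
    Permutation Gc (Neg a :: G) -> Permutation Dc D -> derivable (S n) Gc Dc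
| dr_Rneg : forall n a G D Gc Dc, classical a = true -> derivable n (a :: G) D ->
    Permutation Gc G -> Permutation Dc (Neg a :: D) -> derivable (S n) Gc Dc
| dr_Land : forall n phi psi G D Gc Dc, derivable n (phi :: psi :: G) D ->
    Permutation Gc (And phi psi :: G) -> Permutation Dc D -> derivable (S n) Gc Dc
| dr_Rand : forall n phi psi G L D Gc Dc, all_classical L ->
    derivable n G (phi :: L) -> derivable n G (psi :: L) ->
    Permutation Gc G -> Permutation Dc (And phi psi :: L ++ D) -> derivable (S n) Gc Dc
| dr_Lor : forall n phi psi G L D Gc Dc, all_classical L ->
    derivable n (phi :: G) L -> derivable n (psi :: G) L ->
    Permutation Gc (Or phi psi :: G) -> Permutation Dc (L ++ D) -> derivable (S n) Gc Dc
| dr_Ror : forall n phi psi G D Gc Dc, derivable n G (phi :: psi :: D) ->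
    Permutation Gc G -> Permutation Dc (Or phi psi :: D) -> derivable (S n) Gc Dc
| dr_Lidis : forall n c phiL phiR G D Gc Dc,
    derivable n (plug c phiL :: G) D -> derivable n (plug c phiR :: G) D ->
    Permutation Gc (plug c (Idis phiL phiR) :: G) -> Permutation Dc D -> derivable (S n) Gc Dc
| dr_Ridis : forall n c phiL phiR (i : bool) G D Gc Dc,
    derivable n G (plug c (if i then phiL else phiR) :: D) ->
    Permutation Gc G -> Permutation Dc (plug c (Idis phiL phiR) :: D) -> derivable (S n) Gc Dc.

Lemma derivable_perm n G D G' D' :
  derivable n G D -> Permutation G G' -> Permutation D D' -> derivable n G' D'.
Proof.
  intros H HG HD; destruct H.
  - apply dr_var with p G'0 D'0; perm_solve.
  - apply dr_bot with G'0; perm_solve.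
  - apply dr_Lneg with a G D; auto; perm_solve.
  - apply dr_Rneg with a G D; auto; perm_solve.
  - apply dr_Land with phi psi G D; auto; perm_solve.
  - apply dr_Rand with phi psi G L D; auto; perm_solve.
  - apply dr_Lor with phi psi G L D; auto; perm_solve.
  - apply dr_Ror with phi psi G D; auto; perm_solve.
  - apply dr_Lidis with c phiL phiR G D; auto; perm_solve.
  - apply dr_Ridis with c phiL phiR i G D; auto; perm_solve.
Qed.

Ltac close :=
  solve [ assumption
        | perm_solve
        | match goal with H : derivable _ _ _ |- derivable _ _ _ =>
            eapply derivable_perm; [exact H | perm_solve | perm_solve] end ].

Lemma derivable_S n G D : derivable n G D -> derivable (S n) G D.
Proof.
  induction 1;
    [eapply dr_var | eapply dr_bot | eapply dr_Lneg | eapply dr_Rneg | eapply dr_Land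
     | eapply dr_Rand with phi psi G L D | eapply dr_Lor with phi psi G L D | eapply dr_Ror
     | eapply dr_Lidis with c phiL phiR G D | eapply dr_Ridis]; eauto.
Qed.

Lemma derivable_mono n m G D : derivable n G D -> n <= m -> derivable m G D.
Proof. intros H Hle; induction Hle; auto using derivable_S. Qed.

Lemma derivable_of_derivh n G D : derivh n G D -> derivable n G D.
Proof.
  induction 1;
    [eapply dr_var | eapply dr_bot | eapply dr_Lneg | eapply dr_Rneg | eapply dr_Land
     | eapply dr_Rand with phi psi G L D | eapply dr_Lor with phi psi G L D | eapply dr_Ror
     | eapply dr_Lidis with c phiL phiR G D | eapply dr_Ridis];
    eauto using derivable_mono, Nat.le_max_l, Nat.le_max_r.
Qed.

Lemma vdash_of_derivable n G D : derivable n G D -> vdash n G D.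
Proof.
  induction 1;
    repeat match goal with H : vdash _ _ _ |- _ => destruct H as (? & ? & ?) end.
  - exists 1; split; [lia | eapply ax_var; eauto].
  - exists 1; split; [lia | eapply ax_bot; eauto].
  - eexists; split; [| eapply r_Lneg; eauto]; lia.
  - eexists; split; [| eapply r_Rneg; eauto]; lia.
  - eexists; split; [| eapply r_Land; eauto]; lia.
  - eexists; split; [| eapply r_Rand with phi psi G L D; eauto]; lia.
  - eexists; split; [| eapply r_Lor with phi psi G L D; eauto]; lia.
  - eexists; split; [| eapply r_Ror; eauto]; lia.
  - eexists; split; [| eapply r_Lidis with c phiL phiR G D; eauto]; lia.
  - eexists; split; [| eapply r_Ridis; eauto]; lia.
Qed.

Lemma derivable_of_vdash n G D : vdash n G D -> derivable n G D.
Proof.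
  intros (m & Hm & H). exact (derivable_mono _ _ _ _ (derivable_of_derivh _ _ _ H) Hm).
Qed.

Lemma derivable_weaken n G D G' D' : derivable n G D -> derivable n (G' ++ G) (D' ++ D).
Proof.
  intro H; revert G' D'; induction H; intros G'' D'';
    repeat match goal with IH : forall _ _ : list formula, derivable _ _ _ |- _ =>
      pose proof (IH G'' D''); pose proof (IH G'' []); clear IH end.
  - apply dr_var with p (G'' ++ G') (D'' ++ D'); close.
  - apply dr_bot with (G'' ++ G'); close.
  - apply dr_Lneg with a (G'' ++ G) (D'' ++ D); close.
  - apply dr_Rneg with a (G'' ++ G) (D'' ++ D); close.
  - apply dr_Land with phi psi (G'' ++ G) (D'' ++ D); close.
  - apply dr_Rand with phi psi (G'' ++ G) L (D'' ++ D); close.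
  - apply dr_Lor with phi psi (G'' ++ G) L (D'' ++ D); close.
  - apply dr_Ror with phi psi (G'' ++ G) (D'' ++ D); close.
  - apply dr_Lidis with c phiL phiR (G'' ++ G) (D'' ++ D); close.
  - apply dr_Ridis with c phiL phiR i (G'' ++ G) (D'' ++ D); close.
Qed.

Lemma plug_idis_not_classical c phiL phiR : classical (plug c (Idis phiL phiR)) = false.
Proof. induction c; simpl; rewrite ?IHc, ?andb_false_r; reflexivity. Qed.

Lemma plug_idis_neq_classical c phiL phiR f :
  classical f = true -> plug c (Idis phiL phiR) <> f.
Proof. intros Hf <-. now rewrite plug_idis_not_classical in Hf. Qed.

Lemma all_classical_perm_app L L1 L2 :
  all_classical L -> Permutation L (L1 ++ L2) -> all_classical L2.
Proof.
  intros HL HP. apply (Permutation_Forall HP), Forall_app in HL. apply HL.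
Qed.

Lemma all_classical_app L1 L2 :
  all_classical L1 -> all_classical L2 -> all_classical (L1 ++ L2).
Proof. intros. now apply Forall_app. Qed.

(* [left_principal n x G D]: [x, G => D] is an axiom, or the conclusion of a
   left rule with principal formula [x] whose premises have height at most [n].
   [right_principal] is the same for a right rule. *)
Inductive left_principal (n : nat) : formula -> list formula -> list formula -> Prop :=
| lp_var p G D : In (Var p) D -> left_principal n (Var p) G D
| lp_bot G D : left_principal n Bot G D
| lp_Lneg a G D : classical a = true -> derivable n G (a :: D) ->
    left_principal n (Neg a) G D
| lp_Land phi psi G D : derivable n (phi :: psi :: G) D ->
    left_principal n (And phi psi) G D
| lp_Lor phi psi G L D D' : all_classical L ->
    derivable n (phi :: G) L -> derivable n (psi :: G) L -> Permutation D (L ++ D') ->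
    left_principal n (Or phi psi) G D
| lp_Lidis c phiL phiR G D :
    derivable n (plug c phiL :: G) D -> derivable n (plug c phiR :: G) D ->
    left_principal n (plug c (Idis phiL phiR)) G D.

Inductive right_principal (n : nat) : formula -> list formula -> list formula -> Prop :=
| rp_var p G D : In (Var p) G -> right_principal n (Var p) G D
| rp_Rneg a G D : classical a = true -> derivable n (a :: G) D ->
    right_principal n (Neg a) G D
| rp_Rand phi psi G L D D' : all_classical L ->
    derivable n G (phi :: L) -> derivable n G (psi :: L) -> Permutation D (L ++ D') ->
    right_principal n (And phi psi) G D
| rp_Ror phi psi G D : derivable n G (phi :: psi :: D) ->
    right_principal n (Or phi psi) G D
| rp_Ridis c phiL phiR (i : bool) G D :
    derivable n G (plug c (if i then phiL else phiR) :: D) ->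
    right_principal n (plug c (Idis phiL phiR)) G D.

(* [admissible_left n F A B]: the rule  F, G => D / A, G => B, D  preserves
   derivability with height at most [n]; similarly for [admissible_right]. *)
Definition admissible_left (n : nat) (F A B : list formula) : Prop :=
  forall Gc G D, derivable n Gc D -> Permutation Gc (F ++ G) ->
  derivable n (A ++ G) (B ++ D).

Definition admissible_right (n : nat) (F A B : list formula) : Prop :=
  forall G Dc D, derivable n G Dc -> Permutation Dc (F ++ D) ->
  derivable n (A ++ G) (B ++ D).

Definition principal_left_step (n : nat) (F A B : list formula) : Prop :=
  forall x F' G D, Permutation F (x :: F') -> left_principal n x (F' ++ G) D ->
  derivable (S n) (A ++ G) (B ++ D).

Definition principal_right_step (n : nat) (F A B : list formula) : Prop :=
  forall x F' G D, Permutation F (x :: F') -> right_principal n x G (F' ++ D) ->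
  derivable (S n) (A ++ G) (B ++ D).

Lemma admissible_left_O F A B : admissible_left 0 F A B.
Proof. intros Gc G D H. inversion H. Qed.

Lemma admissible_right_O F A B : admissible_right 0 F A B.
Proof. intros G Dc D H. inversion H. Qed.

Ltac case_last_rule H :=
  let Em := fresh "Em" in
  match type of H with derivable (S ?n) _ _ => remember (S n) as m eqn:Em end;
  destruct H as [k p Gc Dc G' D' HG HD | k Gc Dc G' HG
    | k a G0 D0 Gc Dc Ha Hp HG HD | k a G0 D0 Gc Dc Ha Hp HG HD
    | k phi psi G0 D0 Gc Dc Hp HG HD
    | k phi psi G0 L D0 Gc Dc HL Hp1 Hp2 HG HD | k phi psi G0 L D0 Gc Dc HL Hp1 Hp2 HG HD
    | k phi psi G0 D0 Gc Dc Hp HG HD | k c phiL phiR G0 D0 Gc Dc Hp1 Hp2 HG HD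
    | k c phiL phiR i G0 D0 Gc Dc Hp HG HD];
  injection Em as ->.

Ltac split_principal x Gp F G :=
  destruct (perm_cons_app_inv x Gp F G ltac:(perm_solve))
    as [(F' & HF & ?) | (K & HK & ?)].

Lemma admissible_left_S n F A B :
  all_classical B -> admissible_left n F A B -> principal_left_step n F A B ->
  admissible_left (S n) F A B.
Proof.
  intros HB IH Hpr Gx G D H; case_last_rule H; intro PG.
  - split_principal (Var p) G' F G.
    + apply (Hpr _ F' G Dc HF), lp_var, (perm_head_in _ _ _ HD).
    + apply dr_var with p (A ++ K) (B ++ D'); close.
  - split_principal Bot G' F G.
    + apply (Hpr _ F' G Dc HF), lp_bot.
    + apply dr_bot with (A ++ K); close.
  - split_principal (Neg a) G0 F G.
    + apply (Hpr _ F' G Dc HF), lp_Lneg; close.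
    + pose proof (IH _ K _ Hp ltac:(perm_solve)).
      apply dr_Lneg with a (A ++ K) (B ++ D0); close.
  - pose proof (IH _ (a :: G) _ Hp ltac:(perm_solve)).
    apply dr_Rneg with a (A ++ G) (B ++ D0); close.
  - split_principal (And phi psi) G0 F G.
    + apply (Hpr _ F' G Dc HF), lp_Land; close.
    + pose proof (IH _ (phi :: psi :: K) _ Hp ltac:(perm_solve)).
      apply dr_Land with phi psi (A ++ K) (B ++ D0); close.
  - pose proof (IH _ G _ Hp1 ltac:(perm_solve)). pose proof (IH _ G _ Hp2 ltac:(perm_solve)).
    apply dr_Rand with phi psi (A ++ G) (B ++ L) D0;
      [apply all_classical_app; auto | close..].
  - split_principal (Or phi psi) G0 F G.
    + apply (Hpr _ F' G Dc HF), lp_Lor with L D0; close.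
    + pose proof (IH _ (phi :: K) _ Hp1 ltac:(perm_solve)).
      pose proof (IH _ (psi :: K) _ Hp2 ltac:(perm_solve)).
      apply dr_Lor with phi psi (A ++ K) (B ++ L) D0;
        [apply all_classical_app; auto | close..].
  - pose proof (IH _ G _ Hp ltac:(perm_solve)).
    apply dr_Ror with phi psi (A ++ G) (B ++ D0); close.
  - split_principal (plug c (Idis phiL phiR)) G0 F G.
    + apply (Hpr _ F' G Dc HF), lp_Lidis; close.
    + pose proof (IH _ (plug c phiL :: K) _ Hp1 ltac:(perm_solve)).
      pose proof (IH _ (plug c phiR :: K) _ Hp2 ltac:(perm_solve)).
      apply dr_Lidis with c phiL phiR (A ++ K) (B ++ D0); close.
  - pose proof (IH _ G _ Hp ltac:(perm_solve)).
    apply dr_Ridis with c phiL phiR i (A ++ G) (B ++ D0); close.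
Qed.

(* When a rule with a classical context [L] and a weakened part splits [F]
   between the two, the part of [F] lying in [L] must be absorbed by [B]. *)
Definition covers_proper_parts (B F : list formula) : Prop :=
  forall F1 x F2, Permutation F (F1 ++ x :: F2) -> exists B', Permutation B (F1 ++ B').

Lemma transform_classical_context n F A B L D0 K :
  all_classical B -> covers_proper_parts B F -> admissible_right n F A B ->
  all_classical L -> Permutation (L ++ D0) (F ++ K) ->
  exists L0 W, all_classical L0 /\ Permutation (B ++ K) (L0 ++ W) /\
    forall G X, derivable n G (X ++ L) -> derivable n (A ++ G) (X ++ L0).
Proof.
  intros HB HBF IH HL H.
  destruct (perm_app_app_inv _ _ _ _ H) as (F1 & F2 & L' & D' & HF & HL' & HD & HK).
  destruct F2 as [|x F2].
  - exists (B ++ L'), D0. split; [|split].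
    + apply all_classical_app; [exact HB|]. apply (all_classical_perm_app L F1); [exact HL|].
      rewrite app_nil_r in HF. perm_solve.
    + perm_solve.
    + intros G X HX. pose proof (IH _ _ (X ++ L') HX ltac:(perm_solve)). close.
  - destruct (HBF F1 x F2 HF) as [B' HB'].
    exists L, (B' ++ D'). split; [exact HL | split; [perm_solve |]].
    intros G X HX. exact (derivable_weaken _ _ _ A [] HX).
Qed.

Lemma admissible_right_S n F A B :
  all_classical B -> covers_proper_parts B F ->
  admissible_right n F A B -> principal_right_step n F A B ->
  admissible_right (S n) F A B.
Proof.
  intros HB HBF IH Hpr G Dx D H; case_last_rule H; intro PD.
  - split_principal (Var p) D' F D.
    + apply (Hpr _ F' Gc D HF), rp_var, (perm_head_in _ _ _ HG).
    + apply dr_var with p (A ++ G') (B ++ K); close.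
  - apply dr_bot with (A ++ G'); close.
  - pose proof (IH _ _ (a :: D) Hp ltac:(perm_solve)).
    apply dr_Lneg with a (A ++ G0) (B ++ D); close.
  - split_principal (Neg a) D0 F D.
    + apply (Hpr _ F' Gc D HF), rp_Rneg; close.
    + pose proof (IH _ _ K Hp ltac:(perm_solve)).
      apply dr_Rneg with a (A ++ G0) (B ++ K); close.
  - pose proof (IH _ _ D Hp ltac:(perm_solve)).
    apply dr_Land with phi psi (A ++ G0) (B ++ D); close.
  - split_principal (And phi psi) (L ++ D0) F D.
    + apply (Hpr _ F' Gc D HF), rp_Rand with L D0; close.
    + destruct (transform_classical_context _ _ _ _ L D0 K HB HBF IH HL ltac:(perm_solve))
        as (L0 & W & HL0 & HW & Ht).
      pose proof (Ht _ [phi] Hp1). pose proof (Ht _ [psi] Hp2).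
      apply dr_Rand with phi psi (A ++ G0) L0 W; close.
  - destruct (transform_classical_context _ _ _ _ L D0 D HB HBF IH HL ltac:(perm_solve))
      as (L0 & W & HL0 & HW & Ht).
    pose proof (Ht _ [] Hp1). pose proof (Ht _ [] Hp2).
    apply dr_Lor with phi psi (A ++ G0) L0 W; close.
  - split_principal (Or phi psi) D0 F D.
    + apply (Hpr _ F' Gc D HF), rp_Ror; close.
    + pose proof (IH _ _ (phi :: psi :: K) Hp ltac:(perm_solve)).
      apply dr_Ror with phi psi (A ++ G0) (B ++ K); close.
  - pose proof (IH _ _ D Hp1 ltac:(perm_solve)). pose proof (IH _ _ D Hp2 ltac:(perm_solve)).
    apply dr_Lidis with c phiL phiR (A ++ G0) (B ++ D); close.
  - split_principal (plug c (Idis phiL phiR)) D0 F D.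
    + apply (Hpr _ F' Gc D HF), rp_Ridis with i; close.
    + pose proof (IH _ _ (plug c (if i then phiL else phiR) :: K) Hp ltac:(perm_solve)).
      apply dr_Ridis with c phiL phiR i (A ++ G0) (B ++ K); close.
Qed.

Lemma covers_proper_parts_singleton B f : covers_proper_parts B [f].
Proof.
  intros [|y F1] x F2 H; [now exists B|].
  apply Permutation_length in H. simpl in H. rewrite length_app in H. simpl in H. lia.
Qed.

Lemma inv_Lneg n a : classical a = true -> admissible_left n [Neg a] [] [a].
Proof.
  intro Ha; induction n as [|n IH]; [apply admissible_left_O|].
  apply admissible_left_S; [now constructor | exact IH |].
  intros x F G D [-> ->]%perm_singleton_inv Hp; simpl in *.
  inversion Hp; subst; [now apply derivable_S | destruct c; discriminate].
Qed.

Lemma inv_Land n phi psi : admissible_left n [And phi psi] [phi; psi] [].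
Proof.
  revert phi psi; induction n as [|n IH]; intros phi psi; [apply admissible_left_O|].
  apply admissible_left_S; [constructor | apply IH |].
  intros x F G D [-> ->]%perm_singleton_inv Hp; simpl in *.
  inversion Hp as [| | | ? ? ? ? Hd | | c phiL phiR ? ? Hd1 Hd2 E]; subst;
    [now apply derivable_S|].
  destruct c as [| c f | f c | | | |]; simpl in *; try discriminate; injection E as <- <-.
  - pose proof (IH (plug c phiL) f _ G D Hd1 (Permutation_refl _)).
    pose proof (IH (plug c phiR) f _ G D Hd2 (Permutation_refl _)).
    apply dr_Lidis with c phiL phiR (f :: G) D; close.
  - pose proof (IH f (plug c phiL) _ G D Hd1 (Permutation_refl _)).
    pose proof (IH f (plug c phiR) _ G D Hd2 (Permutation_refl _)).
    apply dr_Lidis with c phiL phiR (f :: G) D; close.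
Qed.

Lemma inv_Lor n phi psi (b : bool) :
  admissible_left n [Or phi psi] [if b then phi else psi] [].
Proof.
  revert phi psi; induction n as [|n IH]; intros phi psi; [apply admissible_left_O|].
  apply admissible_left_S; [constructor | apply IH |].
  intros x F G D [-> ->]%perm_singleton_inv Hp; simpl in *.
  inversion Hp as [| | | | ? ? ? L ? D' HL Hd1 Hd2 HD | c phiL phiR ? ? Hd1 Hd2 E]; subst.
  - apply derivable_S. pose proof (derivable_weaken _ _ _ [] D' Hd1).
    pose proof (derivable_weaken _ _ _ [] D' Hd2). destruct b; close.
  - destruct c as [| | | c f | f c | |]; simpl in *; try discriminate; injection E as <- <-.
    + pose proof (IH (plug c phiL) f _ G D Hd1 (Permutation_refl _)).
      pose proof (IH (plug c phiR) f _ G D Hd2 (Permutation_refl _)).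
      destruct b; [apply dr_Lidis with c phiL phiR G D | apply derivable_S]; close.
    + pose proof (IH f (plug c phiL) _ G D Hd1 (Permutation_refl _)).
      pose proof (IH f (plug c phiR) _ G D Hd2 (Permutation_refl _)).
      destruct b; [apply derivable_S | apply dr_Lidis with c phiL phiR G D]; close.
Qed.

(* (L-idis) is inverted for arbitrary resolutions of inquisitive disjunctions:
   the last rule may resolve a different occurrence in the same formula, and
   its premises then contain the inverted formula only up to that resolution. *)
Inductive resolves : formula -> formula -> Prop :=
| rs_var p : resolves (Var p) (Var p)
| rs_bot : resolves Bot Bot
| rs_neg a : resolves (Neg a) (Neg a)
| rs_and a b a' b' : resolves a a' -> resolves b b' -> resolves (And a b) (And a' b')
| rs_or a b a' b' : resolves a a' -> resolves b b' -> resolves (Or a b) (Or a' b')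
| rs_idis a b a' b' : resolves a a' -> resolves b b' -> resolves (Idis a b) (Idis a' b')
| rs_idisL a b a' : resolves a a' -> resolves (Idis a b) a'
| rs_idisR a b b' : resolves b b' -> resolves (Idis a b) b'.

Lemma resolves_refl f : resolves f f.
Proof. induction f; constructor; auto. Qed.

Lemma resolves_plug c phiL phiR (b : bool) :
  resolves (plug c (Idis phiL phiR)) (plug c (if b then phiL else phiR)).
Proof.
  induction c; simpl; try solve [constructor; auto using resolves_refl].
  destruct b; [apply rs_idisL | apply rs_idisR]; apply resolves_refl.
Qed.

Lemma resolves_plug_inv c phiL phiR g : resolves (plug c (Idis phiL phiR)) g ->
  resolves (plug c phiL) g \/ resolves (plug c phiR) g \/
  exists c' gL gR, g = plug c' (Idis gL gR) /\
    resolves (plug c phiL) (plug c' gL) /\ resolves (plug c phiR) (plug c' gR).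
Proof.
  revert g; induction c; simpl; intros g H; inversion H; subst; auto;
    try match goal with
    | Hs : resolves (plug c _) ?g' |- _ =>
        destruct (IHc g' Hs) as [? | [? | (c' & gL & gR & -> & ? & ?)]]
    end.
  1: right; right; exists Hole, a', b'; auto.
  all: try solve [left; constructor; auto | right; left; constructor; auto].
  all: right; right;
    let witness d :=
      solve [exists d, gL, gR; simpl; auto using rs_and, rs_or, rs_idis, rs_idisL, rs_idisR] in
    first [ witness (CAndL c' b') | witness (CAndR a' c') | witness (COrL c' b')
          | witness (COrR a' c') | witness (CIdisL c' b') | witness (CIdisR a' c')
          | witness c' ].
Qed.

Lemma inv_resolves n f g : resolves f g -> admissible_left n [f] [g] [].
Proof.
  revert f g; induction n as [|n IH]; intros f g Hfg; [apply admissible_left_O|].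
  apply admissible_left_S; [constructor | now apply IH |].
  intros x F G D [-> ->]%perm_singleton_inv Hp; simpl in *.
  revert Hfg; destruct Hp as [p G D Hin | G D | a G D Ha Hd | phi psi G D Hd
    | phi psi G L D D' HL Hd1 Hd2 HD | c phiL phiR G D Hd1 Hd2]; intro Hfg.
  - inversion Hfg; subst. destruct (in_perm _ _ Hin) as [D' HD].
    apply dr_var with p G D'; close.
  - inversion Hfg; subst. apply dr_bot with G; close.
  - inversion Hfg; subst. apply dr_Lneg with a G D; close.
  - inversion Hfg as [| | | ? ? a' b' Ha' Hb' | | | |]; subst.
    pose proof (IH phi a' Ha' _ (psi :: G) D Hd (Permutation_refl _)) as X.
    pose proof (IH psi b' Hb' _ (a' :: G) D X ltac:(perm_solve)).
    apply dr_Land with a' b' G D; close.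
  - inversion Hfg as [| | | | ? ? a' b' Ha' Hb' | | |]; subst.
    pose proof (IH phi a' Ha' _ G L Hd1 (Permutation_refl _)).
    pose proof (IH psi b' Hb' _ G L Hd2 (Permutation_refl _)).
    apply dr_Lor with a' b' G L D'; close.
  - destruct (resolves_plug_inv _ _ _ _ Hfg)
      as [Hr | [Hr | (c' & gL & gR & -> & HrL & HrR)]].
    + pose proof (IH _ _ Hr _ G D Hd1 (Permutation_refl _)). apply derivable_S; close.
    + pose proof (IH _ _ Hr _ G D Hd2 (Permutation_refl _)). apply derivable_S; close.
    + pose proof (IH _ _ HrL _ G D Hd1 (Permutation_refl _)).
      pose proof (IH _ _ HrR _ G D Hd2 (Permutation_refl _)).
      apply dr_Lidis with c' gL gR G D; close.
Qed.

Lemma inv_Rneg n a : admissible_right n [Neg a] [a] [].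
Proof.
  induction n as [|n IH]; [apply admissible_right_O|].
  apply admissible_right_S;
    [constructor | apply covers_proper_parts_singleton | exact IH |].
  intros x F G D [-> ->]%perm_singleton_inv Hp; simpl in *.
  inversion Hp; subst; [now apply derivable_S | destruct c; discriminate].
Qed.

Lemma inv_Rand n phi psi (b : bool) :
  classical phi = true -> classical psi = true ->
  admissible_right n [And phi psi] [] [if b then phi else psi].
Proof.
  intros Hphi Hpsi; induction n as [|n IH]; [apply admissible_right_O|].
  apply admissible_right_S;
    [constructor; [destruct b; auto | constructor] | apply covers_proper_parts_singleton
    | exact IH |].
  intros x F G D [-> ->]%perm_singleton_inv Hp; simpl in *.
  inversion Hp as [| | ? ? ? L ? D' HL Hd1 Hd2 HD | | c phiL phiR i ? ? Hd E]; subst.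
  - apply derivable_S. pose proof (derivable_weaken _ _ _ [] D' Hd1).
    pose proof (derivable_weaken _ _ _ [] D' Hd2). destruct b; close.
  - exfalso. apply (plug_idis_neq_classical c phiL phiR (And phi psi)); [|exact E].
    simpl. now rewrite Hphi, Hpsi.
Qed.

Lemma inv_Ror n phi psi :
  classical phi = true -> classical psi = true ->
  admissible_right n [Or phi psi] [] [phi; psi].
Proof.
  intros Hphi Hpsi; induction n as [|n IH]; [apply admissible_right_O|].
  apply admissible_right_S;
    [repeat constructor; auto | apply covers_proper_parts_singleton | exact IH |].
  intros x F G D [-> ->]%perm_singleton_inv Hp; simpl in *.
  inversion Hp as [| | | | c phiL phiR i ? ? Hd E]; subst; [now apply derivable_S|].
  exfalso. apply (plug_idis_neq_classical c phiL phiR (Or phi psi)); [|exact E].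
  simpl. now rewrite Hphi, Hpsi.
Qed.

Lemma covers_proper_parts_double a : covers_proper_parts [a] [a; a].
Proof.
  intros [|y [|z F1]] x F2 H.
  - now exists [a].
  - exists []. apply perm_head_in in H.
    now destruct H as [<- | [<- | []]].
  - apply Permutation_length in H. simpl in H. rewrite length_app in H. simpl in H. lia.
Qed.

Section Contraction.

Variable n : nat.
Hypothesis contract_left : forall f, admissible_left n [f; f] [f] [].
Hypothesis contract_right : forall a, classical a = true -> admissible_right n [a; a] [] [a].

Lemma contract_left_principal f G D :
  left_principal n f (f :: G) D -> derivable (S n) (f :: G) D.
Proof.
  intro Hp; inversion Hp as [p ? ? Hin | | a ? ? Ha Hd | phi psi ? ? Hd
    | phi psi ? L ? D' HL Hd1 Hd2 HD | c phiL phiR ? ? Hd1 Hd2]; subst.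
  - destruct (in_perm _ _ Hin) as [D' HD]. apply dr_var with p G D'; close.
  - apply dr_bot with G; close.
  - pose proof (inv_Lneg n a Ha _ G (a :: D) Hd (Permutation_refl _)) as X.
    pose proof (contract_right a Ha G _ D X (Permutation_refl _)).
    apply dr_Lneg with a G D; close.
  - pose proof (inv_Land n phi psi _ (phi :: psi :: G) D Hd ltac:(perm_solve)) as X.
    pose proof (contract_left phi _ (psi :: psi :: G) D X ltac:(perm_solve)) as Y.
    pose proof (contract_left psi _ (phi :: G) D Y ltac:(perm_solve)).
    apply dr_Land with phi psi G D; close.
  - pose proof (inv_Lor n phi psi true _ (phi :: G) L Hd1 ltac:(perm_solve)) as X1.
    pose proof (inv_Lor n phi psi false _ (psi :: G) L Hd2 ltac:(perm_solve)) as X2.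
    pose proof (contract_left phi _ G L X1 (Permutation_refl _)).
    pose proof (contract_left psi _ G L X2 (Permutation_refl _)).
    apply dr_Lor with phi psi G L D'; close.
  - pose proof (inv_resolves n _ _ (resolves_plug c phiL phiR true)
                  _ (plug c phiL :: G) D Hd1 ltac:(perm_solve)) as X1.
    pose proof (inv_resolves n _ _ (resolves_plug c phiL phiR false)
                  _ (plug c phiR :: G) D Hd2 ltac:(perm_solve)) as X2.
    pose proof (contract_left _ _ G D X1 (Permutation_refl _)).
    pose proof (contract_left _ _ G D X2 (Permutation_refl _)).
    apply dr_Lidis with c phiL phiR G D; close.
Qed.

Lemma contract_right_principal a G D : classical a = true ->
  right_principal n a G (a :: D) -> derivable (S n) G (a :: D).
Proof.
  intros Ha Hp; inversion Hp as [p ? ? Hin | b ? ? Hb Hd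
    | phi psi ? L ? D' HL Hd1 Hd2 HD | phi psi ? ? Hd | c phiL phiR i ? ? Hd]; subst.
  - destruct (in_perm _ _ Hin) as [G' HG]. apply dr_var with p G' D; close.
  - pose proof (inv_Rneg n b _ _ D Hd (Permutation_refl _)) as X.
    pose proof (contract_left b _ G D X (Permutation_refl _)).
    apply dr_Rneg with b G D; close.
  - simpl in Ha; apply andb_prop in Ha as [Hphi Hpsi].
    destruct (perm_cons_app_inv (And phi psi) D L D' HD)
      as [(L0 & HL0 & HD0) | (K & HK & HDK)].
    + pose proof (inv_Rand n phi psi true Hphi Hpsi G _ (phi :: L0) Hd1 ltac:(perm_solve))
        as X1.
      pose proof (inv_Rand n phi psi false Hphi Hpsi G _ (psi :: L0) Hd2 ltac:(perm_solve))
        as X2.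
      pose proof (contract_right phi Hphi G _ L0 X1 (Permutation_refl _)).
      pose proof (contract_right psi Hpsi G _ L0 X2 (Permutation_refl _)).
      apply dr_Rand with phi psi G L0 D';
        [apply (all_classical_perm_app L [And phi psi]); auto | close..].
    + apply dr_Rand with phi psi G L K; close.
  - simpl in Ha; apply andb_prop in Ha as [Hphi Hpsi].
    pose proof (inv_Ror n phi psi Hphi Hpsi G _ (phi :: psi :: D) Hd ltac:(perm_solve)) as X.
    pose proof (contract_right phi Hphi G _ (psi :: psi :: D) X ltac:(perm_solve)) as Y.
    pose proof (contract_right psi Hpsi G _ (phi :: D) Y ltac:(perm_solve)).
    apply dr_Ror with phi psi G D; close.
  - now rewrite plug_idis_not_classical in Ha.
Qed.

End Contraction.

Lemma contraction n :
  (forall f, admissible_left n [f; f] [f] []) /\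
  (forall a, classical a = true -> admissible_right n [a; a] [] [a]).
Proof.
  induction n as [|n [CL CR]];
    [split; intros; auto using admissible_left_O, admissible_right_O|].
  split.
  - intro f. apply admissible_left_S; [constructor | apply CL |].
    intros x F G D [-> ->]%perm_double_inv Hp.
    exact (contract_left_principal n CL CR f G D Hp).
  - intros a Ha. apply admissible_right_S;
      [repeat constructor; auto | apply covers_proper_parts_double | now apply CR |].
    intros x F G D [-> ->]%perm_double_inv Hp.
    exact (contract_right_principal n CL CR a G D Ha Hp).
Qed.

Theorem lemma4p3 :
  forall (n : nat), 1 <= n ->
  forall (G D : list formula) (nu alpha : formula),
    Forall (fun f => wf f = true) G ->
    Forall (fun f => wf f = true) D ->
    wf nu = true ->
    classical alpha = true ->
    (vdash n (nu :: nu :: G) D -> vdash n (nu :: G) D) /\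
    (vdash n G (alpha :: alpha :: D) -> vdash n G (alpha :: D)).
Proof.
  intros n _ G D nu alpha _ _ _ Halpha.
  destruct (contraction n) as [CL CR].
  split; intro H; apply vdash_of_derivable.
  - exact (CL nu _ G D (derivable_of_vdash _ _ _ H) (Permutation_refl _)).
  - exact (CR alpha Halpha G _ D (derivable_of_vdash _ _ _ H) (Permutation_refl _)).
Qed.
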